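(* Let $\mathbb{F}$ be a field, $0\neq h\in\mathbb{F}[x]$, and $A=A_h$ the unital $\mathbb{F}$-algebra generated by $x,\hat y$ with $\hat yx-x\hat y=h$. With the complex and maps defined in the context, the right $A$-module maps $s_{-1},s_0,s_1$ form a contracting homotopy, i.e. $\mu\circ s_{-1}=1_A$, $s_{-1}\circ\mu+d_0\circ s_0=1_{A\otimes A}$, $s_0\circ d_0+d_1\circ s_1=1_{A\otimes V\otimes A}$, and $s_1\circ d_1=1_{A\otimes R\otimes A}$.
   Context: $A$ has $\mathbb{F}$-basis $\{x^i\hat y^\ell\}$ and $\hat y f=f\hat y+\delta(f)$ for $f\in\mathbb{F}[x]$, where $\delta(f)=f'h$. Let $V=\mathbb{F}x\oplus\mathbb{F}\hat y\subseteq A$, $R=\mathbb{F}r$ one-dimensional, and all tensor products over $\mathbb{F}$. The complex of $A$-bimodules is $0\to A\otimes R\otimes A\xrightarrow{d_1}A\otimes V\otimes A\xrightarrow{d_0}A\otimes A\xrightarrow{\mu}A\to0$ with $\mu$ multiplication, $d_0(1\otimes v\otimes1)=v\otimes1-1\otimes v$, $d_1(1\otimes r\otimes1)=1\otimes\hat y\otimes x+\hat y\otimes x\otimes1-1\otimes x\otimes\hat y-x\otimes\hat y\otimes1-s_0(h\otimes1)$. Right $A$-module maps: $s_{-1}:A\to A\otimes A$, $s_{-1}(1)=1\otimes1$; $s_0:A\otimes A\to A\otimes V\otimes A$, $s_0(x^k\hat y^\ell\otimes1)=\sum_{i=0}^{k-1}x^i\otimes x\otimes x^{k-1-i}\hat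 y^\ell+\sum_{j=0}^{\ell-1}x^k\hat y^j\otimes\hat y\otimes\hat y^{\ell-1-j}$. $G:\mathbb{F}[x]\to A\otimes R\otimes A$ is linear with $G(x^k)=\sum_{i=0}^{k-1}x^i\otimes r\otimes x^{k-1-i}$. $s_1:A\otimes V\otimes A\to A\otimes R\otimes A$ is the right $A$-module map defined, for $f\in\mathbb{F}[x]$, $a,b\in A$, $\ell\geq0$, by: $s_1(a\otimes\hat y\otimes b)=0$; $s_1(f\hat y^\ell\otimes x\otimes a)=f\,s_1(\hat y^\ell\otimes x\otimes1)a$; $s_1(1\otimes x\otimes1)=0$; $s_1(\hat y^{\ell+1}\otimes x\otimes1)=\hat y\,s_1(\hat y^\ell\otimes x\otimes1)+\sum_{j=0}^\ell\binom{\ell}{j}G(\delta^j(x))\hat y^{\ell-j}$. *)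

From HB Require Import structures.
From mathcomp Require Import all_boot all_order all_algebra.
Set Implicit Arguments. Unset Strict Implicit. Unset Printing Implicit Defensive.
Import Order.TTheory GRing.Theory Num.Theory.
Local Open Scope ring_scope.

(* Representation conventions:
   * The algebra A = A_h is represented, as an F-vector space, by
     Aelt F := {poly {poly F}} : the element  sum_l a_l(x) yh^l  (normal
     ordered, x-part on the left) is the polynomial (in the outer variable,
     standing for yh) with coefficients a_l in F[x].  The basis x^i yh^l is
     (polyC 'X^i) * 'X^l.  The commutative ring product of {poly {poly F}} is
     NOT the product of A; the product of A is [Amul h] below.  (Multiplying
     by a polynomial constant in yh, (f%:P) * r, does agree with left
     multiplication by f in A, since f * (r_l yh^l) = (f r_l) yh^l.)
   * A (x) A is represented by Tens F := {poly {poly Aelt F}}: the element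
     sum_{m,j} u_{m,j} (x) x^j yh^m  has coefficient u_{m,j} at index m
     (outer) and j (inner).  This is A(x)A viewed as a free left A-module
     on the basis x^j yh^m of the right factor, i.e. exactly the vector
     space A (x)_F A.
   * A (x) R (x) A = Tens F (R = F r one-dimensional),
     A (x) V (x) A = Tens F * Tens F  (first component: a(x)x(x)b,
     second component: a(x)yh(x)b). *)

Notation Aelt F := ({poly {poly F}}) (only parsing).
Notation Tens F := ({poly {poly {poly {poly F}}}}) (only parsing).

Section Defs.
Variable F : fieldType.
Variable h : {poly F}.
Local Notation Aelt := (Aelt F).
Local Notation Tens := (Tens F).

Definition scaleA (c : F) (a : Aelt) : Aelt := map_poly (fun q : {poly F} => c *: q) a.


Definition mon (c : F) (i l : nat) : Aelt := (c *: 'X^i)%:P * 'X^l.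
Definition Ax : Aelt := mon 1 1 0.
Definition Ay : Aelt := mon 1 0 1.
Definition A1 : Aelt := mon 1 0 0.
Definition Ah : Aelt := h%:P.

Definition delta (f : {poly F}) : {poly F} := f^`() * h.

(* left multiplication by yh: yh (sum q_b yh^b) = sum (q_b yh^(b+1) + delta(q_b) yh^b) *)
Definition yL (q : Aelt) : Aelt := q * 'X + map_poly delta q.

(* product of A: (sum_a p_a yh^a) q = sum_a p_a (yh^a q) *)
Definition Amul (p q : Aelt) : Aelt :=
  \sum_(a < size p) (p`_a)%:P * iter a yL q.

(* pure tensor a (x) b *)
Definition tens (a b : Aelt) : Tens :=
  map_poly (fun bm : {poly F} => map_poly (fun c : F => scaleA c a) bm) b.

(* evaluation of a bilinear map on a tensor: sum_{m,j} f (u_{m,j}) (x^j yh^m) *)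
Definition Tbil (X : zmodType) (f : Aelt -> Aelt -> X) (t : Tens) : X :=
  \sum_(m < size t) \sum_(j < size t`_m) f (t`_m`_j) (mon 1 j m).

Definition lact (a : Aelt) (t : Tens) : Tens := Tbil (fun u e => tens (Amul a u) e) t.
Definition ract (t : Tens) (a : Aelt) : Tens := Tbil (fun u e => tens u (Amul e a)) t.
Definition lactV (a : Aelt) (p : Tens * Tens) : Tens * Tens := (lact a p.1, lact a p.2).
Definition ractV (p : Tens * Tens) (a : Aelt) : Tens * Tens := (ract p.1 a, ract p.2 a).
Definition mu (t : Tens) : Aelt := Tbil Amul t.

Definition d0 (p : Tens * Tens) : Tens :=
  Tbil (fun u e => tens (Amul u Ax) e - tens u (Amul Ax e)) p.1 +
  Tbil (fun u e => tens (Amul u Ay) e - tens u (Amul Ay e)) p.2.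

Definition sm1 (a : Aelt) : Tens := tens A1 a.

(* s_0 on the basis elements x^k yh^l (x) 1 *)
Definition s0basis (c : F) (k l : nat) : Tens * Tens :=
  (\sum_(i < k) tens (mon c i 0) (mon 1 (k.-1 - i) l),
   \sum_(j < l) tens (mon c k j) (mon 1 0 (l.-1 - j))).

(* s_0 on u (x) 1, linear in u *)
Definition s0gen (u : Aelt) : Tens * Tens :=
  \sum_(l < size u) \sum_(k < size u`_l) s0basis (u`_l`_k) k l.

Definition s0 (t : Tens) : Tens * Tens :=
  Tbil (fun u e => ractV (s0gen u) e) t.

(* the element d1(1 (x) r (x) 1) of A(x)V(x)A:
   1(x)yh(x)x + yh(x)x(x)1 - 1(x)x(x)yh - x(x)yh(x)1 - s0(h(x)1) *)
Definition d1gen : Tens * Tens :=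
  (tens Ay A1 - tens A1 Ay, tens A1 Ax - tens Ax A1) - s0 (tens Ah A1).

Definition d1 (t : Tens) : Tens * Tens :=
  Tbil (fun u e => ractV (lactV u d1gen) e) t.

Definition G (f : {poly F}) : Tens :=
  \sum_(k < size f) \sum_(i < k) tens (mon (f`_k) i 0) (mon 1 (k.-1 - i) 0).

(* S l = s1(yh^l (x) x (x) 1) *)
Fixpoint S (l : nat) : Tens :=
  match l with
  | 0 => 0
  | l'.+1 => lact Ay (S l') +
             \sum_(j < l'.+1) ract (G (iter j delta 'X)) (mon 1 0 (l' - j)) *+ 'C(l', j)
  end.

(* s1 on f yh^l (x) x (x) 1 : f S l, extended linearly in the left factor *)
Definition s1gen (u : Aelt) : Tens :=
  \sum_(l < size u) \sum_(k < size u`_l) lact (mon (u`_l`_k) k 0) (S l).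

Definition s1 (p : Tens * Tens) : Tens :=
  Tbil (fun u e => ract (s1gen u) e) p.1.

End Defs.

From Pilot Require Import Defs.
From mathcomp Require Import all_boot all_order all_algebra.
From mathcomp Require Import ring zify.
Set Implicit Arguments. Unset Strict Implicit. Unset Printing Implicit Defensive.
Import GRing.Theory.
Local Open Scope ring_scope.

(** All maps involved are additive, and [mu], [s_(-1)], [s_0], [d_0], [s_1] are
  right [A]-linear while [d_1] is an [A]-bimodule map, so each identity only
  has to be checked on the generators [u (x) 1], [u (x) v (x) 1] and
  [u (x) r (x) 1], and there by induction on the normal form
  [u = sum_l f_l(x) y^l], i.e. by following the generator through left
  multiplication by [F[x]] and by [y].

  The first identity is immediate and the second is a telescoping sum.  For
  the third, the only nontrivial generator is [u (x) x (x) 1], on which the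
  left-hand side is [s_0(ux (x) 1) - s_0(u (x) 1) x + d_1 s_1(u (x) x (x) 1)];
  this expression commutes with left multiplication by [F[x]] and by [y], so it
  equals [u (x) x (x) 1] because it does for [u = 1].  Commuting with [y] rests
  on the rule
    [s_0(yw (x) 1) = y s_0(w (x) 1) + 1 (x) y (x) w - d_1 (Gext w)],
  where [Gext (f y^l) = G(f) y^l]; this is where [yx - xy = h] and the correction
  [s_0(h (x) 1)] in [d_1] meet.  The fourth identity is proved the same way:
  [s_1] commutes with [F[x]], and with [y] up to a defect that vanishes on
  [d_1(u (x) r (x) 1)]. *)

Definition addf (U V : zmodType) (f : U -> V) := {morph f : a b / a + b}.

Section Additive.
Variables U V W : zmodType.
Implicit Types f g : U -> V.

Lemma addf0 f : addf f -> f 0 = 0.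
Proof. by move=> fD; apply: (@addrI _ (f 0)); rewrite -fD !addr0. Qed.

Lemma addfN f : addf f -> {morph f : a / - a}.
Proof. by move=> fD a; apply: (@addrI _ (f a)); rewrite -fD !subrr addf0. Qed.

Lemma addfB f : addf f -> {morph f : a b / a - b}.
Proof. by move=> fD a b; rewrite fD addfN. Qed.

Lemma addf_sum f : addf f -> forall (I : Type) (r : seq I) (P : pred I) (E : I -> U),
  f (\sum_(i <- r | P i) E i) = \sum_(i <- r | P i) f (E i).
Proof. by move=> fD I r P E; apply: (big_morph f fD (addf0 fD)). Qed.

Lemma addfMn f : addf f -> forall a n, f (a *+ n) = f a *+ n.
Proof. by move=> fD a; elim=> [|n IH]; rewrite ?mulr0n ?addf0 // !mulrS fD IH. Qed.

Lemma addf_comp f (g : V -> W) : addf f -> addf g -> addf (fun a => g (f a)).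
Proof. by move=> fD gD a b; rewrite fD gD. Qed.

Lemma addf_add f g : addf f -> addf g -> addf (fun a => f a + g a).
Proof. by move=> fD gD a b; rewrite fD gD addrACA. Qed.

Lemma addf_sub f g : addf f -> addf g -> addf (fun a => f a - g a).
Proof. by move=> fD gD a b; rewrite fD gD opprD addrACA. Qed.

End Additive.

Lemma telescope_sumr_ord (V : zmodType) n (f : nat -> V) :
  \sum_(i < n) (f i.+1 - f i) = f n - f 0%N.
Proof. by rewrite -(big_mkord xpredT (fun i => f i.+1 - f i)) telescope_sumr. Qed.

Definition psum (R : nzRingType) (X : zmodType) (p : {poly R}) (phi : nat -> R -> X) : X :=
  \sum_(i < size p) phi i p`_i.

Section Psum.
Variables (R : nzRingType) (X : zmodType).
Implicit Types (p q : {poly R}) (phi : nat -> R -> X).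

Lemma psum_widen p phi n : (forall i, phi i 0 = 0) -> (size p <= n)%N ->
  psum p phi = \sum_(i < n) phi i p`_i.
Proof.
move=> H0 Hn; rewrite /psum (big_ord_widen n (fun i => phi i p`_i) Hn) big_mkcond /=.
apply: eq_bigr => i _; case: ifP => // /negbT; rewrite -leqNgt => Hi.
by rewrite nth_default // H0.
Qed.

Lemma addf_psum phi : (forall i, addf (phi i)) -> addf (fun p => psum p phi).
Proof.
move=> H p q; have H0 : forall i, phi i 0 = 0 by move=> i; apply: addf0.
set n := maxn (size p) (size q).
rewrite !(@psum_widen _ _ n) ?leq_maxl ?leq_maxr ?size_polyD //.
by rewrite -big_split /=; apply: eq_bigr => i _; rewrite coefD H.
Qed.

Lemma psum_scaleXn phi c i : (forall j, phi j 0 = 0) -> psum (c *: 'X^i) phi = phi i c.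
Proof.
move=> H0; rewrite (@psum_widen _ _ i.+1) //; last by rewrite (leq_trans (size_scale_leq _ _)) // size_polyXn.
rewrite big_ord_recr /= big1 ?add0r; last first.
  by move=> j _; rewrite coefZ coefXn /= ltn_eqF // mulr0 H0.
by rewrite coefZ coefXn eqxx mulr1.
Qed.

Lemma eq_psum p phi psi : (forall i c, phi i c = psi i c) -> psum p phi = psum p psi.
Proof. by move=> H; apply: eq_bigr => i _; apply: H. Qed.

Lemma psum_map (Y : zmodType) (f : X -> Y) p phi : addf f ->
  f (psum p phi) = psum p (fun i c => f (phi i c)).
Proof. by move=> H; rewrite /psum addf_sum. Qed.

Lemma psum0 phi : psum 0 phi = 0.
Proof. by rewrite /psum size_poly0 big_ord0. Qed.

Lemma poly_psum p : psum p (fun i c => c *: 'X^i) = p.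
Proof. by rewrite /psum -poly_def coefK. Qed.

Lemma psumD p phi psi : psum p (fun i c => phi i c + psi i c) = psum p phi + psum p psi.
Proof. by rewrite /psum -big_split. Qed.

End Psum.

Lemma addf_poly_ext (R : nzRingType) (X : zmodType) (f g : {poly R} -> X) : addf f -> addf g ->
  (forall c i, f (c *: 'X^i) = g (c *: 'X^i)) -> forall p, f p = g p.
Proof.
move=> Hf Hg H p; rewrite -(poly_psum p) !psum_map //.
by apply: eq_psum.
Qed.

Lemma coef2_scaleXX (R : nzRingType) (u : R) j m m' j' :
  ((u *: 'X^j) *: 'X^m : {poly {poly R}})`_m'`_j' = if (m' == m) && (j' == j) then u else 0.
Proof.
rewrite coefZ coefXn; case: eqP => _ /=; last by rewrite mulr0 coef0.
by rewrite mulr1 coefZ coefXn; case: eqP => _; rewrite ?mulr1 ?mulr0.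
Qed.

Lemma poly2_psum (R : nzRingType) (p : {poly {poly R}}) :
  psum p (fun m pm => psum pm (fun j c => (c *: 'X^j) *: 'X^m)) = p.
Proof.
rewrite -{2}(poly_psum p); apply: eq_psum => m pm.
rewrite -(@psum_map _ _ _ (fun x : {poly R} => x *: 'X^m) pm (fun j c => c *: 'X^j)).
  by rewrite poly_psum.
by move=> a b; rewrite scalerDl.
Qed.

Lemma pair_eq (U V : zmodType) (P Q : U * V) : P.1 = Q.1 -> P.2 = Q.2 -> P = Q.
Proof. by case: P; case: Q => /= ? ? ? ? -> ->. Qed.

Section Pairs.
Variables U V : zmodType.
Implicit Types (P Q : U * V) (x : U) (y : V).
Lemma pairD x (x' : U) y (y' : V) : (x, y) + (x', y') = (x + x', y + y').
Proof. by []. Qed.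
Lemma pairN x y : - (x, y) = (- x, - y).
Proof. by []. Qed.
Lemma fstD P Q : (P + Q).1 = P.1 + Q.1. Proof. by []. Qed.
Lemma sndD P Q : (P + Q).2 = P.2 + Q.2. Proof. by []. Qed.
Lemma fstN P : (- P).1 = - P.1. Proof. by []. Qed.
Lemma sndN P : (- P).2 = - P.2. Proof. by []. Qed.
Lemma fst_pair x y : (x, y).1 = x. Proof. by []. Qed.
Lemma snd_pair x y : (x, y).2 = y. Proof. by []. Qed.
Lemma fst0 : (0 : U * V).1 = 0. Proof. by []. Qed.
Lemma snd0 : (0 : U * V).2 = 0. Proof. by []. Qed.
End Pairs.

Section Homotopy.
Context {F : fieldType} {h : {poly F}}.
Local Notation A := ({poly {poly F}}).
Local Notation T := ({poly {poly {poly {poly F}}}}).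
Local Notation AM := (Amul h).
Local Notation yl := (yL h).
Local Notation dl := (delta h).
Implicit Types (c : F) (a b u e w : A) (t : T) (f g : {poly F}).
Local Notation A1 := (@Defs.A1 F).
Local Notation Ax := (@Defs.Ax F).
Local Notation Ay := (@Defs.Ay F).
Local Notation lact := (lact h).
Local Notation ract := (ract h).
Local Notation lactV := (lactV h).
Local Notation ractV := (ractV h).
Local Notation s0gen := (@s0gen F).
Local Notation s1gen := (s1gen h).
Local Notation D := (d1gen h).

Ltac pair_simpl := rewrite ?fstD ?sndD ?fstN ?sndN ?fst_pair ?snd_pair ?fst0 ?snd0.

(** * The algebra [A_h] *)

Lemma addf_delta : addf dl.
Proof. by move=> p q; rewrite /delta derivD mulrDl. Qed.
Lemma delta0 : dl 0 = 0.
Proof. exact: addf0 addf_delta. Qed.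
Lemma deltaM f g : dl (f * g) = f * dl g + dl f * g.
Proof. rewrite /delta derivM; ring. Qed.
Lemma deltaC c : dl c%:P = 0.
Proof. by rewrite /delta derivC mul0r. Qed.
Lemma deltaX : dl 'X = h.
Proof. by rewrite /delta derivX mul1r. Qed.
Lemma delta_nat n : dl n%:R = 0.
Proof. by rewrite -polyC_natr deltaC. Qed.

Lemma coef_yL q i : (yl q)`_i = (if i == 0%N then 0 else q`_i.-1) + dl q`_i.
Proof. by rewrite /yL coefD coefMX coef_map_id0 // delta0. Qed.

Lemma addf_yL : addf yl.
Proof.
move=> p q; apply/polyP => i; rewrite coef_yL [RHS]coefD !coef_yL !coefD addf_delta.
by case: (i == 0%N); rewrite ?addr0 ?coefD; ring.
Qed.

Lemma addf_iter_yL n : addf (iter n yl).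
Proof. by elim: n => [|n IH] // p q; rewrite !iterS IH addf_yL. Qed.

Lemma yL_mulC f q : yl (f%:P * q) = f%:P * yl q + (dl f)%:P * q.
Proof.
apply/polyP => i; rewrite coef_yL [RHS]coefD !coefCM coef_yL !deltaM.
by case: i => [|i] /=; rewrite ?coefCM; ring.
Qed.

Lemma yL_Xn l : yl 'X^l = 'X^(l.+1).
Proof.
apply/polyP => i; rewrite coef_yL !coefXn.
have -> : dl ((i == l)%:R) = 0 by rewrite delta_nat.
by case: i => [|i] //=; rewrite addr0.
Qed.

Lemma iter_yL_Xn l m : iter l yl 'X^m = 'X^(l + m).
Proof. by elim: l => [|l IH] //=; rewrite IH yL_Xn. Qed.

Lemma iter_yL_mulC0 K q l : dl K = 0 -> iter l yl (K%:P * q) = K%:P * iter l yl q.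
Proof. by move=> HK; elim: l => [|l IH] //=; rewrite IH yL_mulC HK polyC0 mul0r addr0. Qed.

Lemma AmulE p q : AM p q = psum p (fun l pl => pl%:P * iter l yl q).
Proof. by []. Qed.

Lemma addf_Amull q : addf (fun p => AM p q).
Proof.
have H := @addf_psum _ _ (fun l (pl : {poly F}) => pl%:P * iter l yl q).
by apply: H => i a b; rewrite polyCD mulrDl.
Qed.

Lemma addf_Amulr p : addf (AM p).
Proof.
move=> a b; rewrite !AmulE -psumD; apply: eq_psum => i c.
by rewrite addf_iter_yL mulrDr.
Qed.

Lemma AmulDl a b q : AM (a + b) q = AM a q + AM b q.
Proof. exact: addf_Amull. Qed.
Lemma AmulDr p a b : AM p (a + b) = AM p a + AM p b.
Proof. exact: addf_Amulr. Qed.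

Lemma monE c i l : mon c i l = (c *: 'X^i) *: 'X^l.
Proof. by rewrite /mon mul_polyC. Qed.

Lemma monC c i : mon c i 0 = (c *: 'X^i)%:P.
Proof. by rewrite /mon expr0 mulr1. Qed.

Lemma addf_A_ext (X : zmodType) (f g : A -> X) : addf f -> addf g ->
  (forall c i l, f (mon c i l) = g (mon c i l)) -> forall p, f p = g p.
Proof.
move=> Hf Hg H; apply: addf_poly_ext => // q l.
pose f' := fun q : {poly F} => f (q *: 'X^l).
pose g' := fun q : {poly F} => g (q *: 'X^l).
have Hf' : addf f' by move=> a b; rewrite /f' scalerDl Hf.
have Hg' : addf g' by move=> a b; rewrite /g' scalerDl Hg.
apply: (@addf_poly_ext _ _ f' g') => // c i.
by rewrite /f' /g' -monE.
Qed.

Lemma Amul_mon c i l q : AM (mon c i l) q = (c *: 'X^i)%:P * iter l yl q.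
Proof.
by rewrite AmulE monE psum_scaleXn // => j; rewrite polyC0 mul0r.
Qed.

Lemma Amul_C f q : AM f%:P q = f%:P * q.
Proof.
rewrite AmulE (@psum_widen _ _ _ _ 1) ?size_polyC_leq1 //.
  by rewrite big_ord1 /= coefC.
by move=> j; rewrite polyC0 mul0r.
Qed.

Lemma Amul_CM f p q : AM (f%:P * p) q = f%:P * AM p q.
Proof.
rewrite AmulE (@psum_widen _ _ _ _ (size p)).
- rewrite /psum mulr_sumr; apply: eq_bigr => i _.
  by rewrite coefCM polyCM mulrA.
- by move=> j; rewrite polyC0 mul0r.
- by rewrite mul_polyC size_scale_leq.
Qed.

Lemma Amul_yL p q : AM (yl p) q = yl (AM p q).
Proof.
move: p; apply: addf_A_ext.
- exact: addf_comp addf_yL (addf_Amull q).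
- exact: addf_comp (addf_Amull q) addf_yL.
move=> c i l.
have -> : yl (mon c i l) = mon c i l.+1 + (dl (c *: 'X^i))%:P * mon 1 0 l.
  by rewrite /mon yL_mulC yL_Xn scale1r expr0 polyC1 mul1r.
rewrite AmulDl (Amul_CM (dl _)) !Amul_mon scale1r expr0 polyC1 mul1r /=.
by rewrite yL_mulC.
Qed.

Lemma Amul_iter p q l : AM (iter l yl p) q = iter l yl (AM p q).
Proof. by elim: l => [|l IH] //=; rewrite Amul_yL IH. Qed.

Lemma AmulA p q r : AM (AM p q) r = AM p (AM q r).
Proof.
move: p; apply: addf_A_ext.
- exact: addf_comp (addf_Amull q) (addf_Amull r).
- exact: addf_Amull.
by move=> c i l; rewrite !Amul_mon Amul_CM Amul_iter.
Qed.

Lemma A1E : A1 = 1 :> A.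
Proof. by rewrite /Defs.A1 /mon scale1r expr0 polyC1 mul1r. Qed.

Lemma Amul1l q : AM A1 q = q.
Proof. by rewrite A1E -polyC1 Amul_C polyC1 mul1r. Qed.

Lemma Amul1r p : AM p A1 = p.
Proof.
move: p; apply: addf_A_ext => //; first exact: addf_Amull.
by move=> c i l; rewrite Amul_mon A1E -(expr0 'X) iter_yL_Xn addn0.
Qed.

Definition cst (c : F) : A := mon c 0 0.

Lemma cstE c : cst c = (c%:P)%:P.
Proof. by rewrite /cst monC expr0 alg_polyC. Qed.

Lemma scaleAE c a : scaleA c a = (c%:P)%:P * a.
Proof.
apply/polyP => i; rewrite coef_map_id0 ?scaler0 // coefCM.
by rewrite mul_polyC.
Qed.

Lemma addf_scaleA c : addf (scaleA c).
Proof. by move=> a b; rewrite !scaleAE mulrDr. Qed.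

Lemma Amul_cstl c q : AM (cst c) q = scaleA c q.
Proof. by rewrite cstE Amul_C scaleAE. Qed.

Lemma Amul_cstr c q : AM q (cst c) = scaleA c q.
Proof.
rewrite AmulE cstE -{2}(poly_psum q) (psum_map _ _ (addf_scaleA c)).
apply: eq_bigr => i _; rewrite scaleAE.
rewrite -(mulr1 (c%:P)%:P) iter_yL_mulC0 ?deltaC // -(expr0 'X) iter_yL_Xn addn0.
by rewrite -mul_polyC; ring.
Qed.

Lemma AmulZl c a b : AM (scaleA c a) b = scaleA c (AM a b).
Proof. by rewrite -!Amul_cstl AmulA. Qed.

Lemma AmulZr c a b : AM a (scaleA c b) = scaleA c (AM a b).
Proof. by rewrite -Amul_cstl -AmulA Amul_cstr AmulZl. Qed.

Lemma mon_scale c i l : mon c i l = scaleA c (mon 1 i l).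
Proof.
by rewrite scaleAE /mon mulrA -polyCM scale1r -mul_polyC.
Qed.

Lemma Amul_mon0 c i c' j m : AM (mon c i 0) (mon c' j m) = mon (c * c') (i + j) m.
Proof.
rewrite Amul_mon /= /mon mulrA -polyCM.
by rewrite -scalerAl -scalerAr scalerA exprD.
Qed.

Lemma mon0E c m : mon c 0 m = (c%:P)%:P * 'X^m.
Proof. by rewrite /mon expr0 alg_polyC. Qed.

Lemma Amul_mon0r c i l c' m : AM (mon c i l) (mon c' 0 m) = mon (c * c') i (l + m).
Proof.
rewrite Amul_mon mon0E iter_yL_mulC0 ?deltaC // iter_yL_Xn.
rewrite /mon mulrA -polyCM; congr (_%:P * _).
by rewrite mulrC mul_polyC scalerA mulrC.
Qed.

Lemma AyE : Ay = 'X :> A.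
Proof. by rewrite /Defs.Ay /mon scale1r expr0 polyC1 mul1r expr1. Qed.
Lemma AxE : Ax = 'X%:P :> A.
Proof. by rewrite /Defs.Ax monC scale1r expr1. Qed.

Lemma Amul_Ay q : AM Ay q = yl q.
Proof. by rewrite Amul_mon scale1r expr0 polyC1 mul1r. Qed.

Lemma Amul_yx : AM Ay Ax = mon 1 1 1 + Ah h.
Proof.
rewrite Amul_Ay AxE -['X%:P]mulr1 yL_mulC deltaX -{1}(expr0 'X) yL_Xn mulr1.
by rewrite /Ah /mon scale1r !expr1.
Qed.

Lemma Amul_xy : AM Ax Ay = mon 1 1 1.
Proof. by rewrite /Defs.Ax /Defs.Ay Amul_mon0 mulr1. Qed.

Lemma Ay_C f : AM Ay f%:P = AM f%:P Ay + (dl f)%:P.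
Proof.
rewrite Amul_Ay Amul_C AyE -[f%:P]mulr1 yL_mulC -{1}(expr0 'X) yL_Xn !mulr1.
by rewrite expr1.
Qed.

Lemma Ay_mon c i l : AM Ay (mon c i l) = mon c i l.+1 + AM (dl (c *: 'X^i))%:P (mon 1 0 l).
Proof.
by rewrite Amul_Ay Amul_C /mon yL_mulC yL_Xn scale1r expr0 polyC1 mul1r.
Qed.

Lemma coef_iter_yL g l m : (iter l yl g%:P)`_m = iter (l - m) dl g *+ 'C(l, m).
Proof.
elim: l m => [|l IH] m.
  by rewrite /= coefC bin0n; case: m => [|m] //=; rewrite mulr1n.
rewrite /= coef_yL; case: m => [|m] /=.
  by rewrite add0r IH !bin0 !mulr1n subn0.
rewrite !IH (addfMn addf_delta) binS mulrnDr addrC subSS.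
case: (ltnP m l) => Hml.
  by rewrite -iterS -subSn.
by rewrite bin_small ?ltnS // !mulr0n.
Qed.

(** * Tensors and the bimodule actions *)

Lemma scaleA0 a : scaleA 0 a = 0.
Proof. by rewrite scaleAE !polyC0 mul0r. Qed.
Lemma scaleA1 a : scaleA 1 a = a.
Proof. by rewrite scaleAE !polyC1 mul1r. Qed.
Lemma scaleAD c c' a : scaleA (c + c') a = scaleA c a + scaleA c' a.
Proof. by rewrite !scaleAE !polyCD mulrDl. Qed.
Lemma scaleA_comp c c' a : scaleA c (scaleA c' a) = scaleA (c * c') a.
Proof. by rewrite !scaleAE mulrA -!polyCM. Qed.
Lemma coef_scaleA c a i : (scaleA c a)`_i = c *: a`_i.
Proof. by rewrite coef_map_id0 // scaler0. Qed.

Lemma coef_tens a b m j : (tens a b)`_m`_j = scaleA b`_m`_j a.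
Proof.
rewrite /tens coef_map_id0 ?map_poly0 // coef_map_id0 //.
by rewrite scaleA0.
Qed.

Lemma tensP t t' : (forall m j, t`_m`_j = t'`_m`_j) -> t = t'.
Proof. by move=> H; apply/polyP => m; apply/polyP => j; apply: H. Qed.

Lemma tensDl a b e : tens (a + b) e = tens a e + tens b e.
Proof. by apply: tensP => m j; rewrite [in RHS]coefD [in RHS]coefD !coef_tens addf_scaleA. Qed.

Lemma tensDr a e e' : tens a (e + e') = tens a e + tens a e'.
Proof. by apply: tensP => m j; rewrite [in RHS]coefD [in RHS]coefD !coef_tens !coefD scaleAD. Qed.

Lemma addf_tensl e : addf (fun a : A => tens a e).
Proof. by move=> a b; apply: tensDl. Qed.
Lemma addf_tensr a : addf (tens a).
Proof. by move=> b b'; apply: tensDr. Qed.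

Lemma tens0l e : tens 0 e = 0. Proof. exact: addf0 (addf_tensl e). Qed.

Lemma tens_scale c a b : tens (scaleA c a) b = tens a (scaleA c b).
Proof.
apply: tensP => m j; rewrite !coef_tens coef_scaleA coefZ scaleA_comp.
by rewrite mulrC.
Qed.

Lemma scaleA_mon c c' k l : scaleA c (mon c' k l) = mon (c * c') k l.
Proof. by rewrite [mon c' k l]mon_scale scaleA_comp -mon_scale. Qed.

Lemma tens_mon1 u j m : tens u (mon 1 j m) = (u *: 'X^j) *: 'X^m.
Proof.
apply: tensP => m' j'; rewrite coef_tens monE !coef2_scaleXX.
by case: ifP => _; rewrite ?scaleA1 ?scaleA0.
Qed.

Lemma tens_mon u c j m : tens u (mon c j m) = tens (scaleA c u) (mon 1 j m).
Proof. by rewrite tens_scale -mon_scale. Qed.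

Lemma tens_monmon c i l c' j m : tens (mon c i l) (mon c' j m) = tens (mon (c * c') i l) (mon 1 j m).
Proof. by rewrite tens_mon mon_scale scaleA_comp -mon_scale mulrC. Qed.

Section TbilS.
Variable X : zmodType.
Implicit Types bf bg : A -> A -> X.

Lemma TbilE bf t : Tbil bf t = psum t (fun m tm => psum tm (fun j u => bf u (mon 1 j m))).
Proof. by []. Qed.

Lemma Tbil_tens1 bf u j m : (forall e, bf 0 e = 0) -> Tbil bf (tens u (mon 1 j m)) = bf u (mon 1 j m).
Proof.
move=> H0; rewrite tens_mon1 TbilE psum_scaleXn; last by move=> i; rewrite psum0.
by rewrite psum_scaleXn.
Qed.

Lemma addf_Tbil bf : (forall e, addf (bf ^~ e)) -> addf (Tbil bf).
Proof.
move=> H t t'; rewrite !TbilE.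
have Hi : forall m, addf (fun tm : {poly A} => psum tm (fun j u => bf u (mon 1 j m))).
  by move=> m; exact: (@addf_psum _ _ (fun j u => bf u (mon 1 j m)) (fun j => H _)).
exact: (addf_psum Hi t t').
Qed.

Lemma Tbil_ext bf bg t : (forall u e, bf u e = bg u e) -> Tbil bf t = Tbil bg t.
Proof. by move=> H; apply: eq_bigr => m _; apply: eq_bigr => j _. Qed.

Lemma TbilD_f bf bg t : Tbil (fun u e => bf u e + bg u e) t = Tbil bf t + Tbil bg t.
Proof.
rewrite !TbilE -psumD; apply: eq_bigr => m _; exact: psumD.
Qed.

End TbilS.

Lemma tens_psum t : psum t (fun m tm => psum tm (fun j u => tens u (mon 1 j m))) = t.
Proof.
rewrite -{2}(poly2_psum t); apply: eq_bigr => m _; apply: eq_bigr => j _.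
exact: tens_mon1.
Qed.

Lemma A_psum e : psum e (fun m em => psum em (fun j c => mon c j m)) = e.
Proof.
rewrite -{2}(poly2_psum e); apply: eq_bigr => m _; apply: eq_bigr => j _.
exact: monE.
Qed.

Lemma addf_T_ext (X : zmodType) (P Q : T -> X) : addf P -> addf Q ->
  (forall u j m, P (tens u (mon 1 j m)) = Q (tens u (mon 1 j m))) -> forall t, P t = Q t.
Proof.
move=> HP HQ H t; rewrite -(tens_psum t) !psum_map //.
apply: eq_bigr => m _; rewrite !psum_map //; apply: eq_bigr => j _; exact: H.
Qed.

Lemma Tbil_tens (X : zmodType) (f : A -> A -> X) u e :
  (forall e, addf (f ^~ e)) -> addf (f u) ->
  (forall c e, f (scaleA c u) e = f u (scaleA c e)) -> Tbil f (tens u e) = f u e.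
Proof.
move=> fDl fDr fZ.
have f0 e' : f 0 e' = 0 by exact: addf0 (fDl e').
rewrite -{1}(A_psum e) (psum_map _ _ (addf_tensr u)).
under eq_psum => m em do rewrite (psum_map _ _ (addf_tensr u)).
rewrite (psum_map _ _ (addf_Tbil fDl)).
under eq_psum => m em do rewrite (psum_map _ _ (addf_Tbil fDl)).
rewrite -{2}(A_psum e) (psum_map _ _ fDr); apply: eq_bigr => m _.
rewrite (psum_map _ _ fDr); apply: eq_bigr => j _.
by rewrite tens_mon Tbil_tens1 // fZ -mon_scale.
Qed.

Lemma lactE a t : lact a t = Tbil (fun u e => tens (AM a u) e) t.
Proof. by []. Qed.
Lemma ractE t a : ract t a = Tbil (fun u e => tens u (AM e a)) t.
Proof. by []. Qed.

Lemma addf_lact a : addf (lact a).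
Proof.
apply: addf_Tbil => e; apply: addf_comp (addf_tensl e); exact: addf_Amulr.
Qed.
Lemma addf_ract a : addf (fun t : T => ract t a).
Proof. by apply: addf_Tbil => e; exact: addf_tensl. Qed.

Lemma lactDr a t t' : lact a (t + t') = lact a t + lact a t'.
Proof. exact: addf_lact. Qed.
Lemma ractDl t t' a : ract (t + t') a = ract t a + ract t' a.
Proof. exact: addf_ract. Qed.
Lemma lactDl a b t : lact (a + b) t = lact a t + lact b t.
Proof. by rewrite !lactE -TbilD_f; apply: Tbil_ext => u e; rewrite AmulDl tensDl. Qed.
Lemma ractDr t a b : ract t (a + b) = ract t a + ract t b.
Proof. by rewrite !ractE -TbilD_f; apply: Tbil_ext => u e; rewrite AmulDr tensDr. Qed.
Lemma addf_lact_a t : addf (fun a => lact a t).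
Proof. by move=> a b; exact: lactDl. Qed.

Lemma lact_tens1 a u j m : lact a (tens u (mon 1 j m)) = tens (AM a u) (mon 1 j m).
Proof. by rewrite lactE Tbil_tens1 // => e; rewrite (addf0 (addf_Amulr a)) tens0l. Qed.
Lemma ract_tens1 a u j m : ract (tens u (mon 1 j m)) a = tens u (AM (mon 1 j m) a).
Proof. by rewrite ractE Tbil_tens1 // => e; rewrite tens0l. Qed.

Lemma lact_tens a u e : lact a (tens u e) = tens (AM a u) e.
Proof.
rewrite lactE Tbil_tens //.
- by move=> e'; apply: addf_comp (addf_tensl e'); exact: addf_Amulr.
- exact: addf_tensr.
- by move=> c e'; rewrite AmulZr tens_scale.
Qed.
Lemma ract_tens a u e : ract (tens u e) a = tens u (AM e a).
Proof.
rewrite ractE Tbil_tens //.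
- by move=> e'; exact: addf_tensl.
- by move=> b b'; rewrite AmulDl tensDr.
- by move=> c e'; rewrite AmulZl tens_scale.
Qed.

Lemma lactA a b t : lact a (lact b t) = lact (AM a b) t.
Proof.
move: t; apply: addf_T_ext.
- exact: addf_comp (addf_lact b) (addf_lact a).
- exact: addf_lact.
by move=> u j m; rewrite !lact_tens1 AmulA.
Qed.

Lemma ractA t a b : ract (ract t a) b = ract t (AM a b).
Proof.
move: t; apply: addf_T_ext.
- exact: addf_comp (addf_ract a) (addf_ract b).
- exact: addf_ract.
by move=> u j m; rewrite !ract_tens1 ract_tens AmulA.
Qed.

Lemma lact_ract a t b : lact a (ract t b) = ract (lact a t) b.
Proof.
move: t; apply: addf_T_ext.
- exact: addf_comp (addf_ract b) (addf_lact a).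
- exact: addf_comp (addf_lact a) (addf_ract b).
by move=> u j m; rewrite ract_tens1 lact_tens lact_tens1 ract_tens1.
Qed.

Lemma lact1 t : lact A1 t = t.
Proof.
move: t; apply: addf_T_ext => //; first exact: addf_lact.
by move=> u j m; rewrite lact_tens1 Amul1l.
Qed.

Lemma ract1 t : ract t A1 = t.
Proof.
move: t; apply: addf_T_ext => //; first exact: addf_ract.
by move=> u j m; rewrite ract_tens1 Amul1r.
Qed.

Lemma lact_cst c t : lact (cst c) t = ract t (cst c).
Proof.
move: t; apply: addf_T_ext; [exact: addf_lact | exact: addf_ract |].
by move=> u j m; rewrite lact_tens1 ract_tens1 Amul_cstl Amul_cstr tens_scale.
Qed.

Lemma Tbil_ract (X : zmodType) (Rx : X -> A -> X) (f : A -> A -> X) t a :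
  (forall a, addf (Rx ^~ a)) -> (forall e, addf (f ^~ e)) -> (forall u, addf (f u)) ->
  (forall u c e, f (scaleA c u) e = f u (scaleA c e)) ->
  (forall u e a, f u (AM e a) = Rx (f u e) a) ->
  Tbil f (ract t a) = Rx (Tbil f t) a.
Proof.
move=> RxD fDl fDr fZ fM; move: t; apply: addf_T_ext.
- exact: addf_comp (addf_ract a) (addf_Tbil fDl).
- exact: addf_comp (addf_Tbil fDl) (RxD a).
move=> u j m; rewrite ract_tens1 Tbil_tens // Tbil_tens1 ?fM //.
by move=> e; exact: addf0 (fDl e).
Qed.


Lemma monD c c' i l : mon (c + c') i l = mon c i l + mon c' i l.
Proof. by rewrite /mon scalerDl polyCD mulrDl. Qed.
Lemma mon0 i l : mon (0 : F) i l = 0.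
Proof. by rewrite /mon scale0r polyC0 mul0r. Qed.

Lemma lact_sum a I (r : seq I) (P : pred I) (f : I -> T) :
  lact a (\sum_(i <- r | P i) f i) = \sum_(i <- r | P i) lact a (f i).
Proof. exact: (addf_sum (addf_lact a) r P f). Qed.
Lemma ract_sum a I (r : seq I) (P : pred I) (f : I -> T) :
  ract (\sum_(i <- r | P i) f i) a = \sum_(i <- r | P i) ract (f i) a.
Proof. exact: (addf_sum (addf_ract a) r P f). Qed.

Lemma lact0 a : lact a 0 = 0. Proof. exact: (addf0 (addf_lact a)). Qed.
Lemma ract0 a : ract 0 a = 0. Proof. exact: addf0 (addf_ract a). Qed.
Lemma lact0a t : lact 0 t = 0. Proof. exact: addf0 (addf_lact_a t). Qed.
Lemma lactNr a t : lact a (- t) = - lact a t. Proof. exact: (addfN (addf_lact a) t). Qed.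
Lemma ractNl a t : ract (- t) a = - ract t a. Proof. exact: (addfN (addf_ract a) t). Qed.
Lemma lactBr a t t' : lact a (t - t') = lact a t - lact a t'.
Proof. exact: (addfB (addf_lact a) t t'). Qed.
Lemma ractBl a t t' : ract (t - t') a = ract t a - ract t' a.
Proof. exact: (addfB (addf_ract a) t t'). Qed.
Lemma ract_natmul a t n : ract (t *+ n) a = ract t a *+ n. Proof. exact: (addfMn (addf_ract a) t n). Qed.

Lemma s0genE u : s0gen u = psum u (fun l ul => psum ul (fun k c => s0basis c k l)).
Proof. by []. Qed.
Lemma s1genE u : s1gen u = psum u (fun l ul => psum ul (fun k c => lact (mon c k 0) (S h l))).
Proof. by []. Qed.
Lemma GE f : G f = psum f (fun k c => \sum_(i < k) tens (mon c i 0) (mon 1 (k.-1 - i) 0)).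
Proof. by []. Qed.

Lemma s0basisD c c' k l : s0basis (c + c') k l = s0basis c k l + s0basis c' k l.
Proof.
rewrite /s0basis pairD -!big_split /=; congr pair; apply: eq_bigr => i _;
  by rewrite monD tensDl.
Qed.

Lemma s0basis0 k l : s0basis (0 : F) k l = 0.
Proof. exact: (@addf0 _ _ (fun c => s0basis c k l) (fun x y => s0basisD x y k l)). Qed.

Lemma addf_s0gen : addf s0gen.
Proof.
move=> u u'; rewrite !s0genE.
have Hi : forall l, addf (fun ul : {poly F} => psum ul (fun k c => s0basis c k l)).
  by move=> l; exact: (@addf_psum _ _ (fun k c => s0basis c k l) (fun k x y => s0basisD x y k l)).
exact: (addf_psum Hi u u').
Qed.

Lemma s0gen_mon c k l : s0gen (mon c k l) = s0basis c k l.
Proof.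
rewrite s0genE monE psum_scaleXn; last by move=> j; rewrite psum0.
by rewrite psum_scaleXn // => j; rewrite s0basis0.
Qed.

Lemma addf_s1gen : addf s1gen.
Proof.
move=> u u'; rewrite !s1genE.
have Hi : forall l, addf (fun ul : {poly F} => psum ul (fun k c => lact (mon c k 0) (S h l))).
  move=> l; have Hk : forall k, addf (fun c => lact (mon c k 0) (S h l)).
    by move=> k x y; rewrite monD lactDl.
  exact: (@addf_psum _ _ (fun k c => lact (mon c k 0) (S h l)) Hk).
exact: (addf_psum Hi u u').
Qed.

Lemma s1gen_mon c k l : s1gen (mon c k l) = lact (mon c k 0) (S h l).
Proof.
rewrite s1genE monE psum_scaleXn; last by move=> j; rewrite psum0.
by rewrite psum_scaleXn // => j; rewrite mon0 lact0a.
Qed.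

Lemma addf_G : addf (@G F).
Proof.
have Hk : forall k, addf (fun c : F => \sum_(i < k) tens (mon c i 0) (mon 1 (k.-1 - i) 0)).
  by move=> k x y; rewrite -big_split; apply: eq_bigr => i _; rewrite monD tensDl.
exact: (@addf_psum _ _ (fun k c => \sum_(i < k) tens (mon c i 0) (mon 1 (k.-1 - i) 0)) Hk).
Qed.

Lemma G_mon c k : G (c *: 'X^k) = \sum_(i < k) tens (mon c i 0) (mon 1 (k.-1 - i) 0).
Proof.
rewrite GE psum_scaleXn // => j; apply: big1 => i _; by rewrite mon0 tens0l.
Qed.

Definition Gext w : T := psum w (fun l wl => ract (G wl) (mon 1 0 l)).

Lemma addf_Gext : addf Gext.
Proof.
have Hk : forall l, addf (fun wl : {poly F} => ract (G wl) (mon 1 0 l)).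
  by move=> l x y; rewrite addf_G ractDl.
exact: (@addf_psum _ _ (fun l wl => ract (G wl) (mon 1 0 l)) Hk).
Qed.

Lemma Gext_scaleXn q l : Gext (q *: 'X^l) = ract (G q) (mon 1 0 l).
Proof.
rewrite /Gext psum_scaleXn // => j; by rewrite (addf0 addf_G) ract0.
Qed.

Lemma Gext_mon c k l : Gext (mon c k l) = ract (G (c *: 'X^k)) (mon 1 0 l).
Proof. by rewrite monE Gext_scaleXn. Qed.

Lemma mu_tens u e : mu h (tens u e) = AM u e.
Proof.
rewrite /mu Tbil_tens //.
- move=> e'; exact: addf_Amull.
- exact: addf_Amulr.
- by move=> c e'; rewrite AmulZl AmulZr.
Qed.

Lemma addf_mu : addf (mu h).
Proof. by apply: addf_Tbil => e; exact: addf_Amull. Qed.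

Lemma s0gen_scaleA c u : s0gen (scaleA c u) = lactV (cst c) (s0gen u).
Proof.
move: u; apply: addf_A_ext.
- exact: addf_comp (addf_scaleA c) addf_s0gen.
- move=> x y; rewrite addf_s0gen /lactV /= !lactDr //.
move=> c' k l; rewrite scaleA_mon !s0gen_mon /s0basis /lactV /=.
congr pair; rewrite lact_sum; apply: eq_bigr => i _;
  by rewrite lact_tens1 Amul_cstl scaleA_mon.
Qed.

Lemma s0_tens u e : s0 h (tens u e) = ractV (s0gen u) e.
Proof.
rewrite /s0 Tbil_tens //.
- by move=> e' x y; rewrite addf_s0gen /ractV /= !ractDl.
- by move=> x y; rewrite /ractV /= !ractDr.
- by move=> c e'; rewrite s0gen_scaleA /ractV /= !lact_cst !ractA !Amul_cstl.
Qed.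

Lemma addf_s0 : addf (s0 h).
Proof. by apply: addf_Tbil => e x y; rewrite addf_s0gen /ractV /= !ractDl. Qed.

(** * The first two identities *)

Definition d0v (v u e : A) : T := tens (AM u v) e - tens u (AM v e).

Lemma d0E p : d0 h p = Tbil (d0v Ax) p.1 + Tbil (d0v Ay) p.2.
Proof. by []. Qed.

Lemma addf_d0v v e : addf (d0v v ^~ e).
Proof. by move=> x y; rewrite /d0v AmulDl !tensDl opprD addrACA. Qed.

Lemma d0v_tens v u e : Tbil (d0v v) (tens u e) = d0v v u e.
Proof.
rewrite Tbil_tens //.
- exact: addf_d0v.
- by move=> x y; rewrite /d0v AmulDr !tensDr opprD addrACA.
- by move=> c e'; rewrite /d0v AmulZl AmulZr !tens_scale.
Qed.

Lemma d0v_ract v t a : Tbil (d0v v) (ract t a) = ract (Tbil (d0v v) t) a.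
Proof.
apply: Tbil_ract.
- exact: addf_ract.
- exact: addf_d0v.
- by move=> u x y; rewrite /d0v AmulDr !tensDr opprD addrACA.
- by move=> c u e'; rewrite /d0v AmulZl AmulZr !tens_scale.
- by move=> u e' a'; rewrite /d0v ractBl !ract_tens AmulA.
Qed.

Lemma addf_d0 : addf (d0 h).
Proof.
move=> p q; rewrite !d0E /= !(addf_Tbil (@addf_d0v _)) addrACA //.
Qed.

Lemma d0_ract p a : d0 h (ractV p a) = ract (d0 h p) a.
Proof. by rewrite !d0E /= !d0v_ract ractDl. Qed.

Lemma d0v_sum v n (f : 'I_n -> T) : Tbil (d0v v) (\sum_(i < n) f i) = \sum_(i < n) Tbil (d0v v) (f i).
Proof. exact: (addf_sum (addf_Tbil (@addf_d0v v)) (index_enum _) xpredT f). Qed.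

Lemma d0_s0gen u : d0 h (s0gen u) = tens u A1 - tens A1 u.
Proof.
move: u; apply: addf_A_ext.
- exact: addf_comp addf_s0gen addf_d0.
- by move=> x y; rewrite tensDl tensDr opprD addrACA.
move=> c k l; rewrite s0gen_mon d0E /s0basis /= !d0v_sum.
under eq_bigr => i _ do rewrite d0v_tens /d0v /Defs.Ax !Amul_mon0 mulr1 addn1 add1n.
under [X in _ + X]eq_bigr => i _ do rewrite d0v_tens /d0v /Defs.Ay !Amul_mon0r mulr1 addn1 add1n.
rewrite mulr1.
rewrite (eq_bigr (fun i : 'I_k => tens (mon c i.+1 0) (mon 1 (k - i.+1) l) - tens (mon c i 0) (mon 1 (k - i) l))); last first.
  move=> i _; have Hi := ltn_ord i; have -> : (k.-1 - i = k - i.+1)%N by lia.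
  by rewrite subnSK.
rewrite [X in _ + X](eq_bigr (fun i : 'I_l => tens (mon c k i.+1) (mon 1 0 (l - i.+1)) - tens (mon c k i) (mon 1 0 (l - i)))); last first.
  move=> i _; have Hi := ltn_ord i; have -> : (l.-1 - i = l - i.+1)%N by lia.
  by rewrite subnSK.
rewrite (telescope_sumr_ord k (fun i => tens (mon c i 0) (mon 1 (k - i) l))).
rewrite (telescope_sumr_ord l (fun i => tens (mon c k i) (mon 1 0 (l - i)))).
rewrite !subnn !subn0 addrC addrA subrK /Defs.A1 (tens_mon (mon 1 0 0)) scaleA_mon mulr1.
by rewrite [tens (mon c k l) _]tens_mon scaleA1.
Qed.

Lemma addf_sm1 : addf (@sm1 F).
Proof. by move=> x y; rewrite /sm1 tensDr. Qed.

Lemma mu_sm1 a : mu h (sm1 a) = a.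
Proof. by rewrite /sm1 mu_tens Amul1l. Qed.

Lemma sm1_mu_add_d0_s0 t : sm1 (mu h t) + d0 h (s0 h t) = t.
Proof.
move: t; apply: addf_T_ext => //.
- exact: addf_add (addf_comp addf_mu addf_sm1) (addf_comp addf_s0 addf_d0).
move=> u j m; rewrite mu_tens s0_tens d0_ract d0_s0gen ractBl !ract_tens Amul1l /sm1.
by rewrite addrC subrK.
Qed.

(** * Commutation rules for [s_0] and [s_1] *)

Lemma scaleXX c c' (n1 n2 : nat) : (c *: 'X^n1) * (c' *: 'X^n2) = (c * c') *: 'X^(n1 + n2) :> {poly F}.
Proof. by rewrite -scalerAl -scalerAr scalerA exprD. Qed.

Lemma G0 : G (0 : {poly F}) = 0.
Proof. exact: (addf0 addf_G). Qed.

Lemma G_mul f g : G (f * g) = lact f%:P (G g) + ract (G f) g%:P.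
Proof.
move: g; apply: addf_poly_ext.
- by move=> x y; rewrite mulrDr addf_G.
- by move=> x y; rewrite addf_G lactDr polyCD ractDr addrACA.
move=> c' n2; move: f; apply: addf_poly_ext.
- by move=> x y; rewrite mulrDl addf_G.
- by move=> x y; rewrite addf_G polyCD lactDl ractDl addrACA.
move=> c n1; rewrite scaleXX !G_mon -!monC.
rewrite lact_sum ract_sum big_split_ord /= addrC; congr (_ + _).
- apply: eq_bigr => i _; rewrite lact_tens1 Amul_mon0.
  by have Hi := ltn_ord i; congr (tens _ (mon _ _ _)); lia.
- apply: eq_bigr => i _; rewrite ract_tens1 Amul_mon0 [RHS]tens_monmon mul1r.
  by have Hi := ltn_ord i; congr (tens _ (mon _ _ _)); lia.
Qed.

Lemma Gext_polyCM f w : Gext (AM f%:P w) = lact f%:P (Gext w) + ract (G f) w.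
Proof.
move: w; apply: addf_A_ext.
- by move=> x y; rewrite AmulDr addf_Gext.
- by move=> x y; rewrite addf_Gext lactDr ractDr addrACA.
move=> c k l; rewrite Amul_C.
have -> : f%:P * mon c k l = (f * (c *: 'X^k)) *: 'X^l by rewrite /mon mulrA -polyCM mul_polyC.
rewrite Gext_scaleXn G_mul ractDl ractA -lact_ract Gext_mon; congr (_ + _).
by rewrite -monC Amul_mon0 mulr1 addn0.
Qed.

Lemma Gext_mulAy w : Gext (AM w Ay) = ract (Gext w) Ay.
Proof.
move: w; apply: addf_A_ext.
- by move=> x y; rewrite AmulDl addf_Gext.
- by move=> x y; rewrite addf_Gext ractDl.
move=> c k l; rewrite /Defs.Ay Amul_mon0r !Gext_mon ractA Amul_mon0r mulr1.
by rewrite mulr1.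
Qed.

Lemma S_recE l : S h l.+1 = lact Ay (S h l) +
  \sum_(j < l.+1) ract (G (iter j dl 'X)) (mon 1 0 (l - j)) *+ 'C(l, j).
Proof. by []. Qed.

Lemma Gext_iter_yL g l : Gext (iter l yl g%:P) =
  \sum_(j < l.+1) ract (G (iter j dl g)) (mon 1 0 (l - j)) *+ 'C(l, j).
Proof.
rewrite /Gext (@psum_widen _ _ _ _ l.+1); last first.
- apply/leq_sizeP => m Hm; rewrite coef_iter_yL bin_small ?mulr0n //.
- by move=> j; rewrite G0 ract0.
rewrite (reindex_inj rev_ord_inj) /=; apply: eq_bigr => j _.
rewrite coef_iter_yL (addfMn addf_G) ract_natmul subSS.
have Hj : (j <= l)%N by rewrite -ltnS.
by rewrite subKn // bin_sub.
Qed.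

Lemma S_succ l : S h l.+1 = lact Ay (S h l) + Gext (AM (mon 1 0 l) Ax).
Proof.
by rewrite S_recE Amul_mon scale1r expr0 polyC1 mul1r AxE Gext_iter_yL.
Qed.

Lemma s0gen_polyC f : s0gen f%:P = (G f, 0).
Proof.
move: f; apply: addf_poly_ext.
- by move=> x y; rewrite polyCD addf_s0gen.
- by move=> x y; rewrite addf_G pairD addr0.
by move=> c k; rewrite -monC s0gen_mon G_mon /s0basis big_ord0.
Qed.

Lemma lactVD a p p' : lactV a (p + p') = lactV a p + lactV a p'.
Proof. by rewrite /lactV /= !lactDr. Qed.
Lemma ractVD a p p' : ractV (p + p') a = ractV p a + ractV p' a.
Proof. by rewrite /ractV /= !ractDl. Qed.
Lemma lactVDl a b p : lactV (a + b) p = lactV a p + lactV b p.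
Proof. by rewrite /lactV /= !lactDl. Qed.
Lemma ractVDr a b p : ractV p (a + b) = ractV p a + ractV p b.
Proof. by rewrite /ractV /= !ractDr. Qed.
Lemma lactVN a p : lactV a (- p) = - lactV a p.
Proof. by rewrite /lactV /= !lactNr. Qed.
Lemma ractVN a p : ractV (- p) a = - ractV p a.
Proof. by rewrite /ractV /= !ractNl. Qed.
Lemma lactVB a p p' : lactV a (p - p') = lactV a p - lactV a p'.
Proof. by rewrite lactVD lactVN. Qed.
Lemma ractVB a p p' : ractV (p - p') a = ractV p a - ractV p' a.
Proof. by rewrite ractVD ractVN. Qed.
Lemma lactVA a b p : lactV a (lactV b p) = lactV (AM a b) p.
Proof. by rewrite /lactV /= !lactA. Qed.
Lemma ractVA p a b : ractV (ractV p a) b = ractV p (AM a b).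
Proof. by rewrite /ractV /= !ractA. Qed.
Lemma lactV_ractV a p b : lactV a (ractV p b) = ractV (lactV a p) b.
Proof. by rewrite /lactV /ractV /= !lact_ract. Qed.
Lemma lactV0 a : lactV a 0 = 0.
Proof. by rewrite /lactV /= lact0. Qed.
Lemma ractV0 a : ractV 0 a = 0.
Proof. by rewrite /ractV /= ract0. Qed.
Lemma lactV1 p : lactV A1 p = p.
Proof. by rewrite /lactV !lact1; case: p. Qed.
Lemma ractV1 p : ractV p A1 = p.
Proof. by rewrite /ractV !ract1; case: p. Qed.
Lemma lactV0a p : lactV 0 p = 0.
Proof. by rewrite /lactV !lact0a. Qed.
Lemma lactV_pair a x y : lactV a (x, y) = (lact a x, lact a y).
Proof. by []. Qed.
Lemma ractV_pair a x y : ractV (x, y) a = (ract x a, ract y a).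
Proof. by []. Qed.

Lemma pair0D (x y : T) : (x + y, 0) = (x, 0) + (y, 0) :> T * T.
Proof. by rewrite pairD addr0. Qed.
Lemma pairD0 (x y : T) : (0, x + y) = (0, x) + (0, y) :> T * T.
Proof. by rewrite pairD addr0. Qed.

Lemma s0gen_polyCM f w : s0gen (AM f%:P w) = lactV f%:P (s0gen w) + ractV (G f, 0) w.
Proof.
move: w; apply: addf_A_ext.
- by move=> x y; rewrite AmulDr addf_s0gen.
- by move=> x y; rewrite addf_s0gen lactVD ractVDr addrACA.
move=> c' k l; move: f; apply: addf_poly_ext.
- by move=> x y; rewrite polyCD AmulDl addf_s0gen.
- by move=> x y; rewrite polyCD lactVDl addf_G pair0D ractVD addrACA.
move=> c a; rewrite -monC Amul_mon0 !s0gen_mon G_mon /s0basis ractV_pair ract0 lactV_pair.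
rewrite pairD addr0 big_split_ord /=; congr pair.
  rewrite addrC; congr (_ + _).
  - rewrite lact_sum; apply: eq_bigr => i _; rewrite lact_tens1 Amul_mon0.
    by have Hi := ltn_ord i; congr (tens _ (mon _ _ _)); lia.
  - rewrite ract_sum; apply: eq_bigr => i _; rewrite ract_tens1 Amul_mon0 [RHS]tens_monmon mul1r.
    by have Hi := ltn_ord i; congr (tens _ (mon _ _ _)); lia.
rewrite lact_sum; apply: eq_bigr => i _; rewrite lact_tens1.
by rewrite Amul_mon0.
Qed.

Lemma s0gen_mulAy w : s0gen (AM w Ay) = ractV (s0gen w) Ay + (0, tens w A1).
Proof.
move: w; apply: addf_A_ext.
- by move=> x y; rewrite AmulDl addf_s0gen.
- by move=> x y; rewrite addf_s0gen ractVD tensDl pairD0 addrACA.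
move=> c k l; rewrite /Defs.Ay Amul_mon0r mulr1 !s0gen_mon /s0basis ractV_pair pairD addr0.
congr pair.
  rewrite ract_sum; apply: eq_bigr => i _; rewrite ract_tens1 Amul_mon0r mulr1.
  by rewrite addn1.
rewrite addn1 big_ord_recr /= ract_sum subnn; congr (_ + _).
apply: eq_bigr => i _; rewrite ract_tens1 Amul_mon0r mulr1.
by have Hi := ltn_ord i; congr (tens _ (mon _ _ _)); lia.
Qed.

Lemma s1gen_scaleA c u : s1gen (scaleA c u) = lact (cst c) (s1gen u).
Proof.
move: u; apply: addf_A_ext.
- exact: addf_comp (addf_scaleA c) addf_s1gen.
- exact: addf_comp addf_s1gen (addf_lact _).
move=> c' k l; rewrite scaleA_mon !s1gen_mon lactA.
by rewrite Amul_cstl scaleA_mon.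
Qed.

Definition s1x (t : T) : T := Tbil (fun u e => ract (s1gen u) e) t.

Lemma addf_s1x : addf s1x.
Proof. by apply: addf_Tbil => e x y; rewrite addf_s1gen ractDl. Qed.

Lemma s1x_tens u e : s1x (tens u e) = ract (s1gen u) e.
Proof.
rewrite /s1x Tbil_tens //.
- by move=> e' x y; rewrite addf_s1gen ractDl.
- by move=> x y; rewrite ractDr.
- by move=> c e'; rewrite s1gen_scaleA lact_cst ractA Amul_cstl.
Qed.

Lemma s1E p : s1 h p = s1x p.1.
Proof. by []. Qed.

Lemma s1gen_polyCM f w : s1gen (AM f%:P w) = lact f%:P (s1gen w).
Proof.
move: w; apply: addf_A_ext.
- by move=> x y; rewrite AmulDr addf_s1gen.
- by move=> x y; rewrite addf_s1gen lactDr.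
move=> c' k l; move: f; apply: addf_poly_ext.
- by move=> x y; rewrite polyCD AmulDl addf_s1gen.
- by move=> x y; rewrite polyCD lactDl.
by move=> c a; rewrite -monC Amul_mon0 !s1gen_mon lactA Amul_mon0.
Qed.

Definition Gext_xdefect w : T := Gext (AM w Ax) - ract (Gext w) Ax.

Lemma addf_Gext_xdefect : addf Gext_xdefect.
Proof.
by move=> x y; rewrite /Gext_xdefect AmulDl !addf_Gext ractDl opprD addrACA.
Qed.

Lemma S0 : S h 0 = 0.
Proof. by []. Qed.

Lemma s1gen_Ay w : s1gen (AM Ay w) = lact Ay (s1gen w) + Gext_xdefect w.
Proof.
move: w; apply: addf_A_ext.
- by move=> x y; rewrite AmulDr addf_s1gen.
- by move=> x y; rewrite addf_s1gen addf_Gext_xdefect lactDr addrACA.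
move=> c k l; rewrite Ay_mon addf_s1gen s1gen_polyCM !s1gen_mon S_succ.
have -> : mon 1 0 0 = A1 by [].
rewrite lact1 lactA Ay_mon /Gext_xdefect.
have -> : AM (dl (c *: 'X^k))%:P (mon 1 0 0) = (dl (c *: 'X^k))%:P.
  by rewrite -[mon 1 0 0]/A1 Amul1r.
have -> : mon c k 1 = AM (mon c k 0) Ay by rewrite /Defs.Ay Amul_mon0r mulr1.
rewrite lactDl -lactA lactDr.
have -> : mon c k l = AM (c *: 'X^k)%:P (mon 1 0 l) by rewrite -monC Amul_mon0 mulr1 addn0.
rewrite AmulA Gext_polyCM Gext_polyCM ractDl ractA -monC.
have -> : Gext (mon 1 0 l) = 0.
  by rewrite Gext_mon G_mon big_ord0 ract0.
rewrite lact0 ract0 add0r.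
ring.
Qed.

(** * The third identity *)

Lemma d1E t : d1 h t = Tbil (fun u e => ractV (lactV u D) e) t.
Proof. by []. Qed.

Lemma addf_d1 : addf (d1 h).
Proof. by apply: addf_Tbil => e x y; rewrite lactVDl ractVD. Qed.

Lemma d1_0 : d1 h 0 = 0.
Proof. exact: (addf0 addf_d1). Qed.

Lemma d1_tens1 u j m : d1 h (tens u (mon 1 j m)) = ractV (lactV u D) (mon 1 j m).
Proof. by rewrite d1E Tbil_tens1 // => e; rewrite lactV0a ractV0. Qed.

Lemma lactV_cst c p : lactV (cst c) p = ractV p (cst c).
Proof. by rewrite /lactV /ractV !lact_cst. Qed.

Lemma d1_ract t a : d1 h (ract t a) = ractV (d1 h t) a.
Proof.
rewrite !d1E; apply: Tbil_ract.
- by move=> a' x y; rewrite ractVD.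
- by move=> e' x y; rewrite lactVDl ractVD.
- by move=> u x y; rewrite ractVDr.
- by move=> u c e'; rewrite -(Amul_cstl) -lactVA lactV_cst ractVA Amul_cstl.
- by move=> u e' a'; rewrite ractVA.
Qed.

Lemma d1_lact a t : d1 h (lact a t) = lactV a (d1 h t).
Proof.
move: t; apply: addf_T_ext.
- exact: addf_comp (addf_lact a) addf_d1.
- by move=> x y; rewrite addf_d1 lactVD.
by move=> u j m; rewrite lact_tens1 !d1_tens1 -lactVA lactV_ractV.
Qed.

Lemma d1genE : D = (tens Ay A1 - tens A1 Ay - G h, tens A1 Ax - tens Ax A1).
Proof.
rewrite /d1gen s0_tens /Ah s0gen_polyC ractV1.
by apply: pair_eq; rewrite /= ?subr0.
Qed.

Lemma lactV0x a (x : T) : lactV a (0, x) = (0, lact a x).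
Proof. by rewrite lactV_pair lact0. Qed.
Lemma ractV0x a (x : T) : ractV (0, x) a = (0, ract x a).
Proof. by rewrite ractV_pair ract0. Qed.
Lemma lactVx0 a (x : T) : lactV a (x, 0) = (lact a x, 0).
Proof. by rewrite lactV_pair lact0. Qed.
Lemma ractVx0 a (x : T) : ractV (x, 0) a = (ract x a, 0).
Proof. by rewrite ractV_pair ract0. Qed.

Lemma s0gen_Ay1 : s0gen Ay = (0, tens A1 A1).
Proof. by rewrite /Defs.Ay s0gen_mon /s0basis big_ord0 big_ord1. Qed.
Lemma s0gen_Ax : s0gen Ax = (tens A1 A1, 0).
Proof. by rewrite /Defs.Ax s0gen_mon /s0basis big_ord0 big_ord1. Qed.
Lemma s0gen_A1 : s0gen A1 = 0.
Proof. by rewrite /Defs.A1 s0gen_mon /s0basis !big_ord0. Qed.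

Definition s0gen_ydefect w : T * T := s0gen (AM Ay w) - lactV Ay (s0gen w) - (0, tens A1 w).

Lemma addf_s0gen_ydefect : addf s0gen_ydefect.
Proof.
apply: addf_sub; last by move=> a b; rewrite tensDr pairD0.
apply: addf_sub; first exact: addf_comp (addf_Amulr _) addf_s0gen.
by move=> a b; rewrite addf_s0gen lactVD.
Qed.

Lemma s0gen_ydefect_mulAy w : s0gen_ydefect (AM w Ay) = ractV (s0gen_ydefect w) Ay.
Proof.
rewrite /s0gen_ydefect -AmulA !s0gen_mulAy lactVD lactV_ractV lactV0x lact_tens.
rewrite !ractVB ractV0x ract_tens.
ring.
Qed.

Lemma s0gen_ydefect_polyCM f w :
  s0gen_ydefect (AM f%:P w) = lactV f%:P (s0gen_ydefect w) + ractV (s0gen_ydefect f%:P) w.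
Proof.
rewrite /s0gen_ydefect -AmulA Ay_C AmulDl AmulA !addf_s0gen !s0gen_polyCM s0gen_Ay1 !s0gen_polyC.
rewrite lactVD lactV_ractV lactVA Ay_C lactVDl -lactVA.
rewrite !lactVB !lactV0x !lact_tens !Amul1r.
rewrite !ractVB !ractVD ractVA !ractV0x !ract_tens Amul1l.
ring.
Qed.

Lemma s0gen_ydefect_cst c : s0gen_ydefect (cst c) = 0.
Proof.
rewrite /s0gen_ydefect /cst /Defs.Ay Amul_mon0r mul1r !s0gen_mon /s0basis !big_ord0 big_ord1.
rewrite -[((1 + 0).-1 - ord0)%N]/0%N -[nat_of_ord ord0]/0%N.
rewrite [tens A1 _]tens_mon /Defs.A1 scaleA_mon mulr1 lactV_pair lact0.
by rewrite -[(0, 0)]/(0 : T * T) subr0 subrr.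
Qed.

Lemma s0gen_ydefect_Ax : s0gen_ydefect Ax = - D.
Proof.
rewrite /s0gen_ydefect Amul_yx addf_s0gen s0gen_Ax /Ah s0gen_polyC lactVx0 d1genE /Defs.Ax s0gen_mon /s0basis !big_ord1.
rewrite -[((1 + 0).-1 - ord0)%N]/0%N -[nat_of_ord ord0]/0%N.
rewrite lact_tens Amul1r.
rewrite -[mon 1 0 0]/A1 -[mon 1 0 1]/Ay -[mon 1 1 0]/Ax.
by apply: pair_eq; pair_simpl; ring.
Qed.

Lemma s0gen_ydefect_polyC f : s0gen_ydefect f%:P = - d1 h (G f).
Proof.
move: f; apply: addf_poly_ext.
- by move=> x y; rewrite polyCD addf_s0gen_ydefect.
- by move=> x y; rewrite addf_G addf_d1 opprD.
move=> c k; elim: k => [|k IH].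
  have -> : (c *: 'X^0)%:P = cst c by rewrite -monC.
  by rewrite s0gen_ydefect_cst G_mon big_ord0 d1_0 oppr0.
have -> : (c *: 'X^(k.+1))%:P = AM (c *: 'X^k)%:P Ax.
  by rewrite -!monC /Defs.Ax Amul_mon0 mulr1 addn1.
rewrite s0gen_ydefect_polyCM IH s0gen_ydefect_Ax.
have -> : c *: 'X^(k.+1) = (c *: 'X^k) * 'X by rewrite exprSr scalerAl.
rewrite (G_mul) addf_d1 d1_lact d1_ract.
have -> : G 'X = tens A1 A1 :> T.
  rewrite -['X]scale1r -['X]expr1 G_mon big_ord1.
  by rewrite -[((1).-1 - ord0)%N]/0%N -[nat_of_ord ord0]/0%N.
rewrite -[tens A1 A1]/(tens A1 (mon 1 0 0)) d1_tens1 lactV1 ractV1 -AxE.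
by rewrite lactVN ractVN opprD.
Qed.

Lemma s0gen_ydefectE w : s0gen_ydefect w = - d1 h (Gext w).
Proof.
move: w; apply: addf_A_ext.
- exact: addf_s0gen_ydefect.
- by move=> x y; rewrite addf_Gext addf_d1 opprD.
move=> c k l.
have -> : mon c k l = AM (c *: 'X^k)%:P (mon 1 0 l) by rewrite -monC Amul_mon0 mulr1 addn0.
rewrite s0gen_ydefect_polyCM s0gen_ydefect_polyC.
have -> : s0gen_ydefect (mon 1 0 l) = 0.
  elim: l => [|l IH]; first exact: s0gen_ydefect_cst.
  have -> : mon 1 0 l.+1 = AM (mon 1 0 l) Ay by rewrite /Defs.Ay Amul_mon0r mulr1 addn1.
  by rewrite s0gen_ydefect_mulAy IH ractV0.
rewrite lactV0 add0r ractVN -d1_ract.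
by rewrite -monC Amul_mon0 mulr1 addn0 Gext_mon.
Qed.

Lemma s0gen_Ay w : s0gen (AM Ay w) = lactV Ay (s0gen w) + (0, tens A1 w) - d1 h (Gext w).
Proof.
move: (s0gen_ydefectE w); rewrite /s0gen_ydefect => H.
rewrite -[d1 h (Gext w)]opprK -H; ring.
Qed.

Lemma d1B t t' : d1 h (t - t') = d1 h t - d1 h t'.
Proof. exact: (addfB (addf_d1) t t'). Qed.

Definition htpy_x u : T * T := s0gen (AM u Ax) - ractV (s0gen u) Ax + d1 h (s1gen u).

Lemma addf_htpy_x : addf htpy_x.
Proof.
apply: addf_add; last exact: addf_comp addf_s1gen addf_d1.
apply: addf_sub; first exact: addf_comp (addf_Amull _) addf_s0gen.
by move=> a b; rewrite addf_s0gen ractVD.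
Qed.

Lemma htpy_x_polyCM f w : htpy_x (AM f%:P w) = lactV f%:P (htpy_x w).
Proof.
rewrite /htpy_x AmulA !s0gen_polyCM s1gen_polyCM d1_lact ractVD ractVA -lactV_ractV lactVD lactVB.
ring.
Qed.

Lemma d1N t : d1 h (- t) = - d1 h t.
Proof. exact: (addfN (addf_d1) t). Qed.

Lemma htpy_x_Ay w : htpy_x (AM Ay w) = lactV Ay (htpy_x w).
Proof.
rewrite /htpy_x AmulA !s0gen_Ay s1gen_Ay /Gext_xdefect !addf_d1 ?d1B ?d1N d1_lact d1_ract.
rewrite !ractVB ractVD -lactV_ractV ractV0x ract_tens -d1_ract.
rewrite lactVD lactVB.
ring.
Qed.

Lemma htpy_x1 : htpy_x A1 = (tens A1 A1, 0).
Proof.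
rewrite /htpy_x Amul1l s0gen_Ax s0gen_A1 ractV0 subr0 -[A1]/(mon 1 0 0) s1gen_mon S0 lact0 d1_0 addr0.
by [].
Qed.

Lemma htpy_xE u : htpy_x u = (tens u A1, 0).
Proof.
move: u; apply: addf_A_ext.
- exact: addf_htpy_x.
- by move=> x y; rewrite tensDl pair0D.
move=> c k l.
have -> : mon c k l = AM (c *: 'X^k)%:P (mon 1 0 l) by rewrite -monC Amul_mon0 mulr1 addn0.
rewrite htpy_x_polyCM.
have -> : htpy_x (mon 1 0 l) = (tens (mon 1 0 l) A1, 0).
  elim: l => [|l IH]; first exact: htpy_x1.
  have -> : mon 1 0 l.+1 = AM Ay (mon 1 0 l) by rewrite /Defs.Ay Amul_mon0r mulr1.
  by rewrite htpy_x_Ay IH lactVx0 lact_tens.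
by rewrite lactVx0 lact_tens.
Qed.

Lemma d0v0 (v : A) : Tbil (d0v v) 0 = 0.
Proof. exact: (addf0 (addf_Tbil (addf_d0v v))). Qed.

Lemma addf_s1 : addf (s1 h).
Proof. by move=> p q; rewrite !s1E fstD addf_s1x. Qed.

Lemma addf_s0_d0_add_d1_s1 : addf (fun p => s0 h (d0 h p) + d1 h (s1 h p)).
Proof.
by apply: addf_add; [apply: addf_comp addf_d0 addf_s0 | apply: addf_comp addf_s1 addf_d1].
Qed.

Lemma s0B t t' : s0 h (t - t') = s0 h t - s0 h t'.
Proof. exact: (addfB (addf_s0) t t'). Qed.

Lemma s0_d0_add_d1_s1_x t : s0 h (d0 h (t, 0)) + d1 h (s1 h (t, 0)) = (t, 0).
Proof.
move: t; apply: addf_T_ext.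
- by move=> x y; rewrite -(addf_s0_d0_add_d1_s1 (x, 0) (y, 0)) pairD addr0.
- by move=> x y; rewrite pairD addr0.
move=> u j m; rewrite d0E fst_pair snd_pair d0v0 addr0 d0v_tens /d0v s0B !s0_tens.
rewrite s1E fst_pair s1x_tens d1_ract -ractVA.
transitivity (ractV (htpy_x u) (mon 1 j m)).
  by rewrite /htpy_x ractVD ractVB.
by rewrite htpy_xE ractVx0 ract_tens Amul1l.
Qed.

Lemma s0_d0_add_d1_s1_y t : s0 h (d0 h (0, t)) + d1 h (s1 h (0, t)) = (0, t).
Proof.
move: t; apply: addf_T_ext.
- by move=> x y; rewrite -(addf_s0_d0_add_d1_s1 (0, x) (0, y)) pairD addr0.
- by move=> x y; rewrite pairD addr0.
move=> u j m; rewrite d0E fst_pair snd_pair d0v0 add0r d0v_tens /d0v s0B !s0_tens.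
rewrite s1E fst_pair (addf0 (addf_s1x)) d1_0 addr0 -ractVA s0gen_mulAy ractVD ractV0x ract_tens Amul1l.
by rewrite addrC addKr.
Qed.

Lemma s0_d0_add_d1_s1 p : s0 h (d0 h p) + d1 h (s1 h p) = p.
Proof.
case: p => t1 t2.
have -> : (t1, t2) = (t1, 0) + (0, t2) by rewrite pairD addr0 add0r.
by rewrite (addf_s0_d0_add_d1_s1 (t1, 0) (0, t2)) s0_d0_add_d1_s1_x s0_d0_add_d1_s1_y.
Qed.

(** * The fourth identity *)

Lemma s1x_ract t a : s1x (ract t a) = ract (s1x t) a.
Proof.
apply: Tbil_ract.
- exact: addf_ract.
- by move=> e x y; rewrite addf_s1gen ractDl.
- by move=> u x y; rewrite ractDr.
- by move=> u c e; rewrite s1gen_scaleA lact_cst ractA Amul_cstl.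
- by move=> u e a'; rewrite ractA.
Qed.

Lemma s1x_polyC f t : s1x (lact f%:P t) = lact f%:P (s1x t).
Proof.
move: t; apply: addf_T_ext.
- by move=> x y; rewrite lactDr addf_s1x.
- by move=> x y; rewrite addf_s1x lactDr.
by move=> u j m; rewrite lact_tens1 !s1x_tens s1gen_polyCM lact_ract.
Qed.

Definition s1x_ydefect t : T := Tbil (fun w e => ract (Gext_xdefect w) e) t.

Lemma addf_s1x_ydefect : addf s1x_ydefect.
Proof. by apply: addf_Tbil => e x y; rewrite addf_Gext_xdefect ractDl. Qed.

Lemma s1x_ydefect_tens1 w j m : s1x_ydefect (tens w (mon 1 j m)) = ract (Gext_xdefect w) (mon 1 j m).
Proof.
rewrite /s1x_ydefect Tbil_tens1 // => e.
by rewrite (addf0 (addf_Gext_xdefect)) ract0.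
Qed.

Lemma s1x_Ay t : s1x (lact Ay t) = lact Ay (s1x t) + s1x_ydefect t.
Proof.
move: t; apply: addf_T_ext.
- by move=> x y; rewrite lactDr addf_s1x.
- by move=> x y; rewrite addf_s1x lactDr addf_s1x_ydefect addrACA.
by move=> u j m; rewrite lact_tens1 !s1x_tens s1x_ydefect_tens1 s1gen_Ay ractDl lact_ract.
Qed.

Lemma Gext_scaleA c u : Gext (scaleA c u) = ract (Gext u) (cst c).
Proof.
have -> : scaleA c u = AM (c%:P)%:P u by rewrite Amul_C scaleAE.
have HG : G c%:P = 0 :> T.
  by rewrite -[c%:P]mulr1 mul_polyC -(expr0 'X) G_mon big_ord0.
by rewrite Gext_polyCM HG ract0 addr0 -cstE lact_cst.
Qed.

Lemma s1x_ydefect_sum n (g : 'I_n -> T) :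
  s1x_ydefect (\sum_(i < n) g i) = \sum_(i < n) s1x_ydefect (g i).
Proof. exact: (addf_sum addf_s1x_ydefect (index_enum _) xpredT g). Qed.

Lemma s1x_ydefect_G u f : s1x_ydefect (lact u (G f)) = Gext (AM u f%:P) - ract (Gext u) f%:P.
Proof.
move: f; apply: addf_poly_ext.
- by move=> x y; rewrite addf_G lactDr addf_s1x_ydefect.
- by move=> x y; rewrite polyCD AmulDr addf_Gext ractDr; ring.
move=> c k; rewrite G_mon lact_sum s1x_ydefect_sum.
rewrite (eq_bigr (fun i : 'I_k => ract (Gext (AM u (mon c i.+1 0))) (mon 1 (k - i.+1) 0)
     - ract (Gext (AM u (mon c i 0))) (mon 1 (k - i) 0))); last first.
  move=> i _; rewrite lact_tens1 s1x_ydefect_tens1 /Gext_xdefect ractBl !ractA AmulA.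
  rewrite /Defs.Ax !Amul_mon0 !mulr1 addn1.
  have Hi := ltn_ord i; have -> : (k.-1 - i = k - i.+1)%N by lia.
  by rewrite add1n subnSK.
rewrite (telescope_sumr_ord k (fun i => ract (Gext (AM u (mon c i 0))) (mon 1 (k - i) 0))).
rewrite subnn subn0 -[mon 1 0 0]/A1 ract1 -monC.
by rewrite -[mon c 0 0]/(cst c) Amul_cstr Gext_scaleA ractA Amul_cstl scaleA_mon mulr1.
Qed.

Lemma s1x_ydefectB t t' : s1x_ydefect (t - t') = s1x_ydefect t - s1x_ydefect t'.
Proof. exact: (addfB (addf_s1x_ydefect) t t'). Qed.
Lemma s1xB t t' : s1x (t - t') = s1x t - s1x t'.
Proof. exact: (addfB (addf_s1x) t t'). Qed.

Lemma d1gen1E : D.1 = tens Ay A1 - tens A1 Ay - G h.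
Proof. by rewrite d1genE. Qed.

Lemma s1x_ydefect_d1gen u : s1x_ydefect (lact u D.1) = 0.
Proof.
rewrite d1gen1E !lactBr !lact_tens Amul1r !s1x_ydefectB s1x_ydefect_G.
rewrite -[A1]/(mon 1 0 0) -[Ay]/(mon 1 0 1) !s1x_ydefect_tens1 -[mon 1 0 0]/A1 -[mon 1 0 1]/Ay ract1.
rewrite /Gext_xdefect AmulA Amul_yx Gext_mulAy ractA ractBl -Gext_mulAy AmulA Amul_xy ractA Amul_xy.
rewrite AmulDr addf_Gext Amul_yx ractDr /Ah.
ring.
Qed.

Lemma s1x_G f : s1x (G f) = 0.
Proof.
move: f; apply: addf_poly_ext.
- by move=> x y; rewrite addf_G addf_s1x.
- by move=> x y; rewrite addr0.
move=> c k; rewrite G_mon (addf_sum (addf_s1x)) big1 // => i _.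
by rewrite s1x_tens s1gen_mon S0 lact0 ract0.
Qed.

Lemma s1x_d1gen u : s1x (lact u D.1) = tens u A1.
Proof.
move: u; apply: addf_A_ext.
- by move=> x y; rewrite lactDl addf_s1x.
- by move=> x y; rewrite tensDl.
move=> c k l.
have -> : mon c k l = AM (c *: 'X^k)%:P (mon 1 0 l) by rewrite -monC Amul_mon0 mulr1 addn0.
rewrite -lactA s1x_polyC.
have -> : s1x (lact (mon 1 0 l) D.1) = tens (mon 1 0 l) A1.
  elim: l => [|l IH].
    rewrite -[mon 1 0 0]/A1 lact1 d1gen1E !s1xB s1x_G subr0 !s1x_tens ract1.
    rewrite -[A1]/(mon 1 0 0) -[Ay]/(mon 1 0 1) !s1gen_mon S0 lact0 ract0 subr0.
    rewrite -[mon 1 0 0]/A1 lact1 S_succ S0 lact0 add0r Amul1l /Defs.Ax Gext_mon ract1.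
    by rewrite -['X]expr1 G_mon big_ord1.
  have -> : mon 1 0 l.+1 = AM Ay (mon 1 0 l) by rewrite /Defs.Ay Amul_mon0r mulr1.
  by rewrite -lactA s1x_Ay IH s1x_ydefect_d1gen addr0 lact_tens.
by rewrite lact_tens.
Qed.

Lemma s1_d1 t : s1 h (d1 h t) = t.
Proof.
move: t; apply: addf_T_ext => //.
- by move=> x y; rewrite addf_d1 addf_s1.
move=> u j m; rewrite d1_tens1 s1E.
rewrite -[(ractV (lactV u D) (mon 1 j m)).1]/(ract (lact u D.1) (mon 1 j m)).
by rewrite s1x_ract s1x_d1gen ract_tens Amul1l.
Qed.

End Homotopy.

Theorem theorem4p7 (F : fieldType) (h : {poly F}) (hnz : h != 0) :
  (forall a : Aelt F, mu h (sm1 a) = a) /\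
  (forall t : Tens F, sm1 (mu h t) + d0 h (s0 h t) = t) /\
  (forall p : Tens F * Tens F, s0 h (d0 h p) + d1 h (s1 h p) = p) /\
  (forall t : Tens F, s1 h (d1 h t) = t).
Proof.
do !split; [exact: mu_sm1 | exact: sm1_mu_add_d0_s0 | exact: s0_d0_add_d1_s1 | exact: s1_d1].
Qed.
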